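(* Let $H$ be a real Hilbert space, $T\subset H\times H$ a closed convex cone, $T(h):=\{z\in H:(h,z)\in T\}$ and $N:=T^\circ$. Consider: (i) there exists $\beta>0$ such that $\langle h,z\rangle\le-\beta$ for all $(h,z)\in N$ with $\|z\|=1$; (ii) there exists $\beta_1>0$ such that for each $h\in S_H\cap\operatorname{sqri}(\operatorname{Proj}_hT)$ there exists $z$ with $(h,z)\in T$ and $\langle h,z\rangle\ge\beta_1$. Then (i) implies (ii). If moreover $\operatorname{qri}N\neq\emptyset$ and $\operatorname{qri}(\operatorname{Proj}_zN)\subset\operatorname{sqri}(\operatorname{Proj}_hT)$, then (ii) implies (i).
   Context: $S_H$ is the unit sphere of $H$. $T^\circ:=\{(a,b)\in H\times H:\langle a,h\rangle+\langle b,z\rangle\le0\ \forall(h,z)\in T\}$. For $S\subset H\times H$: $\operatorname{Proj}_hS:=\{h:\exists z,\ (h,z)\in S\}$, $\operatorname{Proj}_zS:=\{z:\exists h,\ (h,z)\in S\}$. For a set $A$ in a Hilbert space: $\operatorname{qri}A:=\{x\in A:\overline{\operatorname{cone}}(A-x)\text{ is a linear subspace}\}$ and $\operatorname{sqri}A:=\{x\in A:\operatorname{cone}(A-x)\text{ is a closed linear subspace}\}$, where $\operatorname{cone}(A-x)$ is the cone generated by $A-x$ and $\overline{\operatorname{cone}}$ its norm closure. *)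

From Stdlib Require Import Reals.
Open Scope R_scope.
Set Implicit Arguments.

Record HilbertSpace := {
  HS :> Type;
  hzero : HS;
  hadd : HS -> HS -> HS;
  hopp : HS -> HS;
  hscal : R -> HS -> HS;
  hinner : HS -> HS -> R;
  hadd_assoc : forall x y z, hadd x (hadd y z) = hadd (hadd x y) z;
  hadd_comm : forall x y, hadd x y = hadd y x;
  hadd_0 : forall x, hadd x hzero = x;
  hadd_opp : forall x, hadd x (hopp x) = hzero;
  hscal_assoc : forall a b x, hscal a (hscal b x) = hscal (a * b) x;
  hscal_1 : forall x, hscal 1 x = x;
  hscal_addv : forall a x y, hscal a (hadd x y) = hadd (hscal a x) (hscal a y);
  hscal_adds : forall a b x, hscal (a + b) x = hadd (hscal a x) (hscal b x);
  hinner_sym : forall x y, hinner x y = hinner y x;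
  hinner_addl : forall x y z, hinner (hadd x y) z = hinner x z + hinner y z;
  hinner_scall : forall a x y, hinner (hscal a x) y = a * hinner x y;
  hinner_pos : forall x, 0 <= hinner x x;
  hinner_def : forall x, hinner x x = 0 -> x = hzero;
  hcomplete : forall u : nat -> HS,
    (forall eps, 0 < eps -> exists N, forall m n, (N <= m)%nat -> (N <= n)%nat ->
        sqrt (hinner (hadd (u m) (hopp (u n))) (hadd (u m) (hopp (u n)))) < eps) ->
    exists l, forall eps, 0 < eps -> exists N, forall n, (N <= n)%nat ->
        sqrt (hinner (hadd (u n) (hopp l)) (hadd (u n) (hopp l))) < eps
}.

Definition hnorm (H : HilbertSpace) (x : H) : R := sqrt (hinner H x x).

(** Normed vector space operations, used to state qri / sqri generically
    (on H and on H x H). *)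
Record NOps := {
  V :> Type;
  vzero : V;
  vadd : V -> V -> V;
  vopp : V -> V;
  vscal : R -> V -> V;
  vnorm : V -> R
}.

Definition HOps (H : HilbertSpace) : NOps :=
  {| V := HS H; vzero := hzero H; vadd := hadd H; vopp := hopp H;
     vscal := hscal H; vnorm := hnorm H |}.

Definition PairOps (H : HilbertSpace) : NOps :=
  {| V := (HS H * HS H)%type;
     vzero := (hzero H, hzero H);
     vadd := fun p q => (hadd H (fst p) (fst q), hadd H (snd p) (snd q));
     vopp := fun p => (hopp H (fst p), hopp H (snd p));
     vscal := fun t p => (hscal H t (fst p), hscal H t (snd p));
     vnorm := fun p => sqrt (hinner H (fst p) (fst p) + hinner H (snd p) (snd p)) |}.

Section Gen.
Variable E : NOps.
Definition vsub (x y : E) : E := vadd E x (vopp E y).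

Definition is_closed (A : E -> Prop) : Prop :=
  forall x, ~ A x -> exists eps, 0 < eps /\ forall y, A y -> eps <= vnorm E (vsub x y).

Definition closure (A : E -> Prop) : E -> Prop :=
  fun x => forall eps, 0 < eps -> exists y, A y /\ vnorm E (vsub x y) < eps.

Definition is_convex (A : E -> Prop) : Prop :=
  forall x y t, A x -> A y -> 0 <= t <= 1 ->
    A (vadd E (vscal E t x) (vscal E (1 - t) y)).

Definition is_cone (A : E -> Prop) : Prop :=
  forall t x, 0 <= t -> A x -> A (vscal E t x).

Definition is_linear_subspace (A : E -> Prop) : Prop :=
  A (vzero E) /\ (forall x y, A x -> A y -> A (vadd E x y)) /\
  (forall t x, A x -> A (vscal E t x)).

Definition cone_gen (A : E -> Prop) (x : E) : E -> Prop :=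
  fun v => exists t a, 0 <= t /\ A a /\ v = vscal E t (vsub a x).

Definition qri (A : E -> Prop) : E -> Prop :=
  fun x => A x /\ is_linear_subspace (closure (cone_gen A x)).

Definition sqri (A : E -> Prop) : E -> Prop :=
  fun x => A x /\ is_linear_subspace (cone_gen A x) /\ is_closed (cone_gen A x).
End Gen.

Definition polar (H : HilbertSpace) (T : H * H -> Prop) : H * H -> Prop :=
  fun p => forall h z, T (h, z) -> hinner H (fst p) h + hinner H (snd p) z <= 0.

Definition Proj_h (H : HilbertSpace) (S : H * H -> Prop) : H -> Prop :=
  fun h => exists z, S (h, z).
Definition Proj_z (H : HilbertSpace) (S : H * H -> Prop) : H -> Prop :=
  fun z => exists h, S (h, z).

Definition unit_sphere (H : HilbertSpace) : H -> Prop := fun h => hnorm H h = 1.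

From Stdlib Require Import Reals Lra Psatz Classical ClassicalEpsilon.
Open Scope R_scope.

(* (i) => (ii).  At h in sqri (Proj_h T) the subspace L = cone (Proj_h T - h) is closed,
   hence complete, so a Baire category argument followed by an iteration (Robinson-Ursescu)
   shows that every h + u with u in L small has a preimage (h + u, z) in T with z bounded.
   Consequently, if <h, z> < beta/2 for all (h, z) in T, the point (h, 3 beta/4) lies at
   positive distance from the convex cone {(w, s) : (w, z) in T, s <= <h, z>}, and a
   separating functional (a, c) has c > 0 and gives (a/c, h) in N, contradicting (i).

   (ii) => (i).  For (h, z) in N and p0 in qri N, the segment ]p0, (h, z)] lies in qri N.
   At a point (h_t, z_t) of it with z_t <> 0, the unit vector z_t/|z_t| is in
   qri (Proj_z N), hence in sqri (Proj_h T); (ii) and polarity then give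
   <h_t, z_t> + beta1 |z_t|^2 <= 0, a polynomial inequality in t whose limit t -> 0 is
   <h, z> + beta1 <= 0. *)

(** * Hilbert space calculus *)

Definition hsub (X : HilbertSpace) (x y : X) : X := hadd X x (hopp X y).
Arguments hsub {X} x y.

Notation "x ⊕ y" := (hadd _ x y) (at level 50, left associativity).
Notation "x ⊖ y" := (hsub x y) (at level 50, left associativity).
Notation "t ⊙ x" := (hscal _ t x) (at level 40, left associativity).
Notation "⟪ x , y ⟫" := (hinner _ x y)
  (at level 0, x at level 99, y at level 99, format "⟪ x ,  y ⟫").
Notation nrm := (hnorm _).

Section HilbertAlgebra.
Variable X : HilbertSpace.
Implicit Types x y z e : X.

Lemma hinner_0l e : ⟪hzero X, e⟫ = 0.
Proof. pose proof (hinner_addl X (hzero X) (hzero X) e) as E; rewrite hadd_0 in E; lra. Qed.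

Lemma hinner_oppl x e : ⟪hopp X x, e⟫ = - ⟪x, e⟫.
Proof.
  pose proof (hinner_addl X x (hopp X x) e) as E.
  rewrite hadd_opp, hinner_0l in E; lra.
Qed.

Lemma hinner_0r e : ⟪e, hzero X⟫ = 0.
Proof. rewrite hinner_sym; apply hinner_0l. Qed.

Lemma hinner_oppr x e : ⟪e, hopp X x⟫ = - ⟪e, x⟫.
Proof. rewrite !(hinner_sym X e); apply hinner_oppl. Qed.

Lemma hinner_addr x y z : ⟪z, x ⊕ y⟫ = ⟪z, x⟫ + ⟪z, y⟫.
Proof. rewrite !(hinner_sym X z); apply hinner_addl. Qed.

Lemma hinner_scalr a x y : ⟪y, a ⊙ x⟫ = a * ⟪y, x⟫.
Proof. rewrite !(hinner_sym X y); apply hinner_scall. Qed.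

Lemma hvec_ext x y : (forall e, ⟪x, e⟫ = ⟪y, e⟫) -> x = y.
Proof.
  intro Hxy.
  assert (D : x ⊖ y = hzero X).
  { apply hinner_def; unfold hsub.
    rewrite hinner_addl, hinner_oppl, !Hxy, hinner_addr, hinner_oppr; ring. }
  unfold hsub in D.
  rewrite <- (hadd_0 X x), <- (hadd_opp X y), (hadd_comm X y), hadd_assoc, D,
    hadd_comm, hadd_0.
  reflexivity.
Qed.
End HilbertAlgebra.

Ltac hexpand := cbn [HOps vsub vadd vopp vscal vzero] in *; unfold hsub in *;
  repeat rewrite ?hinner_addl, ?hinner_scall, ?hinner_oppl, ?hinner_0l,
    ?hinner_addr, ?hinner_scalr, ?hinner_oppr, ?hinner_0r in *.
Ltac hvec_eq := apply hvec_ext; let e := fresh "e" in intro e; hexpand.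

Section HilbertNorm.
Variable X : HilbertSpace.
Implicit Types x y z : X.

Lemma hnorm_ge0 x : 0 <= nrm x.
Proof. apply sqrt_pos. Qed.

Lemma hnorm_sqr x : nrm x * nrm x = ⟪x, x⟫.
Proof. apply sqrt_sqrt, hinner_pos. Qed.

Lemma hnorm_eq0 x : nrm x = 0 -> x = hzero X.
Proof. intro E; apply hinner_def; rewrite <- hnorm_sqr, E; ring. Qed.

Lemma cauchy_schwarz x y : ⟪x, y⟫ <= nrm x * nrm y.
Proof.
  set (a := nrm x); set (b := nrm y).
  assert (a0 : 0 <= a) by apply hnorm_ge0; assert (b0 : 0 <= b) by apply hnorm_ge0.
  destruct (Req_dec a 0) as [Ea|Ea].
  { rewrite (hnorm_eq0 x Ea), hinner_0l, Ea; lra. }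
  destruct (Req_dec b 0) as [Eb|Eb].
  { rewrite (hnorm_eq0 y Eb), hinner_0r, Eb; lra. }
  pose proof (hinner_pos X (b ⊙ x ⊕ (- a) ⊙ y)) as P; hexpand.
  rewrite (hinner_sym X y x), <- (hnorm_sqr x), <- (hnorm_sqr y) in P; fold a b in P.
  (* |b x - a y|^2 = 2 a b (a b - <x, y>) *)
  assert (0 < a * b) by (apply Rmult_lt_0_compat; lra).
  nra.
Qed.

Lemma hnorm_opp x : nrm (hopp X x) = nrm x.
Proof. unfold hnorm; f_equal; hexpand; ring. Qed.

Lemma hnorm_add x y : nrm (x ⊕ y) <= nrm x + nrm y.
Proof.
  pose proof (hnorm_ge0 x); pose proof (hnorm_ge0 y); pose proof (hnorm_ge0 (x ⊕ y)).
  pose proof (hnorm_sqr (x ⊕ y)) as S; hexpand.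
  rewrite (hinner_sym X y x), <- (hnorm_sqr x), <- (hnorm_sqr y) in S.
  pose proof (cauchy_schwarz x y); nra.
Qed.

Lemma hnorm_scal t x : nrm (t ⊙ x) = Rabs t * nrm x.
Proof.
  unfold hnorm; hexpand.
  rewrite <- Rmult_assoc, <- (sqrt_Rsqr_abs t), <- sqrt_mult_alt by apply Rle_0_sqr.
  reflexivity.
Qed.

Lemma hnorm_scal_nonneg t x : 0 <= t -> nrm (t ⊙ x) = t * nrm x.
Proof. intro; rewrite hnorm_scal, Rabs_right; lra. Qed.

Lemma hnorm_0 : nrm (hzero X) = 0.
Proof. unfold hnorm; rewrite hinner_0l; apply sqrt_0. Qed.

Lemma hsubrr x : x ⊖ x = hzero X.
Proof. apply hadd_opp. Qed.

Lemma hnorm_subC x y : nrm (x ⊖ y) = nrm (y ⊖ x).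
Proof. unfold hnorm; f_equal; hexpand; ring. Qed.

Lemma hnorm_sub_le x y : nrm (x ⊖ y) <= nrm x + nrm y.
Proof. unfold hsub; rewrite <- (hnorm_opp y); apply hnorm_add. Qed.

Lemma hnorm_le_add_sub x y : nrm y <= nrm x + nrm (x ⊖ y).
Proof. replace y with (x ⊖ (x ⊖ y)) at 1 by (hvec_eq; ring); apply hnorm_sub_le. Qed.

Lemma hnorm_sub_triangle x y z : nrm (x ⊖ z) <= nrm (x ⊖ y) + nrm (y ⊖ z).
Proof.
  replace (x ⊖ z) with ((x ⊖ y) ⊕ (y ⊖ z)) by (hvec_eq; ring).
  apply hnorm_add.
Qed.
End HilbertNorm.

Lemma sqrt_add_le a b : 0 <= a -> 0 <= b -> sqrt (a + b) <= sqrt a + sqrt b.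
Proof.
  intros Ha Hb.
  pose proof (sqrt_pos a); pose proof (sqrt_pos b); pose proof (sqrt_pos (a + b)).
  pose proof (sqrt_sqrt a Ha); pose proof (sqrt_sqrt b Hb);
  pose proof (sqrt_sqrt (a + b) ltac:(lra)).
  nra.
Qed.

Section ProductSpace.
Variable H : HilbertSpace.

Definition HPair : HilbertSpace.
Proof.
  refine {| HS := (HS H * HS H)%type; hzero := (hzero H, hzero H);
    hadd := fun p q => (fst p ⊕ fst q, snd p ⊕ snd q);
    hopp := fun p => (hopp H (fst p), hopp H (snd p));
    hscal := fun t p => (t ⊙ fst p, t ⊙ snd p);
    hinner := fun p q => ⟪fst p, fst q⟫ + ⟪snd p, snd q⟫ |}.
  - intros; simpl; rewrite !hadd_assoc; reflexivity.
  - intros; simpl; rewrite (hadd_comm H (fst x)), (hadd_comm H (snd x)); reflexivity.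
  - intros [a b]; simpl; rewrite !hadd_0; reflexivity.
  - intros [a b]; simpl; rewrite !hadd_opp; reflexivity.
  - intros; simpl; rewrite !hscal_assoc; reflexivity.
  - intros [a b]; simpl; rewrite !hscal_1; reflexivity.
  - intros; simpl; rewrite !hscal_addv; reflexivity.
  - intros; simpl; rewrite !hscal_adds; reflexivity.
  - intros; simpl; rewrite (hinner_sym H (fst x)), (hinner_sym H (snd x)); reflexivity.
  - intros; simpl; rewrite !hinner_addl; ring.
  - intros; simpl; rewrite !hinner_scall; ring.
  - intros; simpl; pose proof (hinner_pos H (fst x)); pose proof (hinner_pos H (snd x)); lra.
  - intros [a b] E; simpl in E; pose proof (hinner_pos H a); pose proof (hinner_pos H b).
    f_equal; apply hinner_def; lra.
  - intros u Hu.
    assert (coordinate_limit : forall (pr : HS H * HS H -> HS H),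
      (forall p, ⟪pr p, pr p⟫ <= ⟪fst p, fst p⟫ + ⟪snd p, snd p⟫) ->
      (forall p q, pr p ⊕ hopp H (pr q) =
         pr (fst p ⊕ hopp H (fst q), snd p ⊕ hopp H (snd q))) ->
      exists l, forall eps, 0 < eps -> exists N, forall n, (N <= n)%nat ->
        nrm (pr (u n) ⊖ l) < eps).
    { intros pr Hpr Hsub; apply hcomplete; intros eps He.
      destruct (Hu eps He) as [N HN]; exists N; intros m n Hm Hn.
      eapply Rle_lt_trans; [|exact (HN m n Hm Hn)].
      rewrite Hsub; apply sqrt_le_1_alt, Hpr. }
    destruct (coordinate_limit fst) as [l1 L1].
    { intros; pose proof (hinner_pos H (snd p)); lra. }
    { reflexivity. }
    destruct (coordinate_limit snd) as [l2 L2].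
    { intros; pose proof (hinner_pos H (fst p)); lra. }
    { reflexivity. }
    exists (l1, l2); intros eps He.
    destruct (L1 (eps / 2)) as [N1 HN1]; [lra|].
    destruct (L2 (eps / 2)) as [N2 HN2]; [lra|].
    exists (Nat.max N1 N2); intros n Hn; simpl.
    eapply Rle_lt_trans; [apply sqrt_add_le; apply hinner_pos|].
    specialize (HN1 n ltac:(lia)); specialize (HN2 n ltac:(lia)).
    unfold hnorm, hsub in HN1, HN2; lra.
Defined.

Lemma hnorm_pair_le a b : hnorm HPair (a, b) <= nrm a + nrm b.
Proof. apply sqrt_add_le; apply hinner_pos. Qed.

Lemma hnorm_fst_le a b : nrm a <= hnorm HPair (a, b).
Proof. apply sqrt_le_1_alt; simpl; pose proof (hinner_pos H b); lra. Qed.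

Lemma hnorm_snd_le a b : nrm b <= hnorm HPair (a, b).
Proof. apply sqrt_le_1_alt; simpl; pose proof (hinner_pos H a); lra. Qed.
End ProductSpace.

(** * Geometric sequences, completeness and the Baire category theorem *)

Lemma half_pow_pos n : 0 < (/2)^n.
Proof. apply pow_lt; lra. Qed.

Lemma half_pow_S n : (/2)^(S n) = (/2)^n / 2.
Proof. simpl; field. Qed.

Lemma half_pow_le1 n : (/2)^n <= 1.
Proof. induction n; simpl; [lra|pose proof (half_pow_pos n); lra]. Qed.

Lemma half_pow_antimono k j : (k <= j)%nat -> (/2)^j <= (/2)^k.
Proof. induction 1; [lra|rewrite half_pow_S; pose proof (half_pow_pos m); lra]. Qed.

Lemma geometric_small K eps : 0 <= K -> 0 < eps -> exists N, K * (/2)^N < eps.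
Proof.
  intros HK He.
  destruct (pow_lt_1_zero (/2) ltac:(rewrite Rabs_right; lra) (eps / (K + 1)))
    as [N HN]; [apply Rdiv_lt_0_compat; lra|].
  exists N; specialize (HN N (le_n _)).
  rewrite Rabs_right in HN by (apply Rle_ge, pow_le; lra).
  apply Rmult_lt_compat_r with (r := K + 1) in HN; [|lra].
  replace (eps / (K + 1) * (K + 1)) with eps in HN by (field; lra).
  pose proof (half_pow_pos N); nra.
Qed.

Lemma le_of_le_geometric a b K : 0 <= K -> (forall n, a <= b + K * (/2)^n) -> a <= b.
Proof.
  intros HK Hab; apply Rnot_lt_le; intro Hlt.
  destruct (geometric_small K (a - b) HK ltac:(lra)) as [N HN].
  specialize (Hab N); lra.
Qed.

Lemma seq_choice (A : Type) (P : nat -> A -> Prop) (R : nat -> A -> A -> Prop) :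
  (exists a0, P 0%nat a0) ->
  (forall n a, P n a -> exists b, P (S n) b /\ R n a b) ->
  exists f : nat -> A, forall n, P n (f n) /\ R n (f n) (f (S n)).
Proof.
  intros [a0 H0] Hstep.
  assert (next : forall n a, {b | P n a -> P (S n) b /\ R n a b}).
  { intros n a; apply constructive_indefinite_description.
    destruct (classic (P n a)) as [Hp|Hp].
    - destruct (Hstep n a Hp) as [b Hb]; exists b; auto.
    - exists a0; tauto. }
  pose (f := fix f n := match n with O => a0 | S k => proj1_sig (next k (f k)) end).
  assert (Pf : forall n, P n (f n)).
  { induction n; [exact H0|apply (proj2_sig (next n (f n)) IHn)]. }
  exists f; intro n; split; [apply Pf|apply (proj2_sig (next n (f n)) (Pf n))].
Qed.

Section Completeness.
Variable X : HilbertSpace.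

Lemma is_closed_iff (A : X -> Prop) :
  is_closed (HOps X) A <->
  forall x, ~ A x -> exists eps, 0 < eps /\ forall y, A y -> eps <= nrm (x ⊖ y).
Proof. reflexivity. Qed.

Lemma is_closed_affine_preimage (A : X -> Prop) (h : X) a :
  0 < a -> is_closed (HOps X) A -> is_closed (HOps X) (fun v => A (h ⊕ a ⊙ v)).
Proof.
  rewrite !is_closed_iff; intros Ha Acl x Nx.
  destruct (Acl _ Nx) as [eps [He Hy]]; exists (eps / a); split; [apply Rdiv_lt_0_compat; lra|].
  intros y Ay; specialize (Hy _ Ay).
  replace (h ⊕ a ⊙ x ⊖ (h ⊕ a ⊙ y)) with (a ⊙ (x ⊖ y)) in Hy by (hvec_eq; ring).
  rewrite hnorm_scal_nonneg in Hy by lra.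
  apply Rmult_le_reg_l with a; [lra|]; replace (a * (eps / a)) with eps by (field; lra); exact Hy.
Qed.

Lemma geometric_cauchy_limit (c : nat -> X) (b : nat -> R) (K : R) :
  0 <= K -> (forall k, b k <= K * (/2)^k) ->
  (forall k j, (k <= j)%nat -> nrm (c j ⊖ c k) <= b k) ->
  exists l, forall k, nrm (c k ⊖ l) <= b k.
Proof.
  intros HK Hb Hc.
  assert (Cauchy : forall eps, 0 < eps -> exists N, forall m n, (N <= m)%nat -> (N <= n)%nat ->
      nrm (c m ⊖ c n) < eps).
  { intros eps He; destruct (geometric_small (2 * K) eps) as [N HN]; [lra|lra|].
    exists N; intros m n Hm Hn.
    pose proof (hnorm_sub_triangle X (c m) (c N) (c n)).
    rewrite (hnorm_subC X (c N) (c n)) in *.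
    pose proof (Hc N m Hm); pose proof (Hc N n Hn); pose proof (Hb N); lra. }
  destruct (hcomplete X c Cauchy) as [l Hl]; exists l; intro k.
  apply Rnot_lt_le; intro Hlt.
  destruct (Hl (nrm (c k ⊖ l) - b k)) as [N HN]; [lra|].
  set (j := Nat.max N k).
  specialize (HN j ltac:(lia)); change (nrm (c j ⊖ l) < nrm (c k ⊖ l) - b k) in HN.
  pose proof (hnorm_sub_triangle X (c k) (c j) l).
  pose proof (Hc k j ltac:(lia)) as Hkj; rewrite hnorm_subC in Hkj; lra.
Qed.

Lemma closed_geometric_limit (A : X -> Prop) (c : nat -> X) l K :
  is_closed (HOps X) A -> (forall k, A (c k)) -> (forall k, nrm (c k ⊖ l) <= K * (/2)^k) ->
  A l.
Proof.
  rewrite is_closed_iff; intros Acl Ac Hl; apply NNPP; intro Nl.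
  destruct (Acl l Nl) as [eps [He Heps]].
  assert (0 <= K)
    by (pose proof (Hl 0%nat); pose proof (hnorm_ge0 X (c 0%nat ⊖ l)); simpl in *; lra).
  destruct (geometric_small K eps) as [N HN]; auto.
  specialize (Heps (c N) (Ac N)); specialize (Hl N); rewrite hnorm_subC in Heps; lra.
Qed.
End Completeness.

Section Baire.
Variable X : HilbertSpace.

Theorem baire (L : X -> Prop) (G : nat -> X -> Prop) :
  is_closed (HOps X) L -> (exists c0, L c0) -> (forall n, is_closed (HOps X) (G n)) ->
  (forall v, L v -> exists n, G n v) ->
  exists n c rho, L c /\ 0 < rho /\ forall v, L v -> nrm (v ⊖ c) < rho -> G n v.
Proof.
  intros Lcl [c0 Lc0] Gcl Cover; apply NNPP; intro Hno.
  assert (Escape : forall n c rho, L c -> 0 < rho ->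
      exists v, L v /\ nrm (v ⊖ c) < rho /\ ~ G n v).
  { intros n c rho Lc Hr; apply NNPP; intro Hn; apply Hno; exists n, c, rho.
    repeat split; auto; intros v Lv Hv; apply NNPP; intro Gv; apply Hn; exists v; auto. }
  (* nested closed balls B(c_k, r_k) in L, the (k+1)-st one avoiding G k *)
  destruct (seq_choice (X * R)
    (fun k p => L (fst p) /\ 0 < snd p /\ snd p <= (/2)^k)
    (fun k p p' => nrm (fst p' ⊖ fst p) < snd p / 2 /\ snd p' <= snd p / 2 /\
        forall v, nrm (fst p' ⊖ v) <= snd p' -> ~ G k v)) as [f Hf].
  { exists (c0, 1); simpl; repeat split; auto; lra. }
  { intros n [c r] [Lc [Hr Hrn]]; cbn [fst snd] in *.
    destruct (Escape n c (r / 2) Lc ltac:(lra)) as [v [Lv [Hv Gv]]].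
    destruct (proj1 (is_closed_iff X (G n)) (Gcl n) v Gv) as [d [Hd Hdv]].
    exists (v, Rmin d r / 2); cbn [fst snd].
    pose proof (Rmin_pos d r Hd Hr); pose proof (Rmin_l d r); pose proof (Rmin_r d r).
    rewrite half_pow_S; repeat split; auto; try lra.
    intros v' Hv' Gv'; specialize (Hdv v' Gv'); lra. }
  set (c k := fst (f k)); set (r k := snd (f k)).
  assert (Hcr : forall k j, (k <= j)%nat -> nrm (c j ⊖ c k) <= r k - r j).
  { induction 1.
    - rewrite hsubrr, hnorm_0; lra.
    - pose proof (hnorm_sub_triangle X (c (S m)) (c m) (c k)).
      destruct (Hf m) as [_ [? [? _]]]; unfold c, r in *; lra. }
  destruct (geometric_cauchy_limit X c r 1) as [l Hl].
  { lra. }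
  { intro k; destruct (Hf k) as [[_ [_ ?]] _]; unfold r; lra. }
  { intros k j Hkj; pose proof (Hcr k j Hkj); destruct (Hf j) as [[_ [? _]] _].
    unfold r in *; lra. }
  assert (Ll : L l).
  { apply (closed_geometric_limit X L c l 1 Lcl); [intro k; apply (Hf k)|].
    intro k; pose proof (Hl k); destruct (Hf k) as [[_ [_ ?]] _]; unfold r in *; lra. }
  destruct (Cover l Ll) as [n Gn].
  destruct (Hf n) as [_ [_ [_ Hball]]]; exact (Hball l (Hl (S n)) Gn).
Qed.
End Baire.

Lemma quadratic_le0_near0 a b c :
  (forall t, 0 < t <= 1 -> a + t * b + t * t * c <= 0) -> a <= 0.
Proof.
  intro Hq; apply Rnot_lt_le; intro Ha.
  set (M := Rabs b + Rabs c + 1).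
  assert (HM : 0 < M) by (unfold M; pose proof (Rabs_pos b); pose proof (Rabs_pos c); lra).
  set (t := Rmin 1 (a / (2 * M))).
  assert (0 < a / (2 * M)) by (apply Rdiv_lt_0_compat; lra).
  assert (Ht : 0 < t <= 1) by (split; [apply Rmin_pos; lra|apply Rmin_l]).
  assert (t * M <= a / 2).
  { replace (a / 2) with (a / (2 * M) * M) by (field; lra).
    apply Rmult_le_compat_r; [lra|apply Rmin_r]. }
  specialize (Hq t Ht).
  pose proof (Rle_abs (- b)); pose proof (Rle_abs (- c)); rewrite !Rabs_Ropp in *.
  assert (- (t * b) <= t * Rabs b) by nra.
  assert (- (t * t * c) <= t * t * Rabs c) by nra.
  assert (t * t * Rabs c <= t * Rabs c)
    by (apply Rmult_le_compat_r; [apply Rabs_pos|nra]).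
  unfold M in *; lra.
Qed.

Lemma real_inf (S : R -> Prop) :
  (exists r, S r) -> (forall r, S r -> 0 <= r) ->
  exists d, 0 <= d /\ (forall r, S r -> d <= r) /\
    forall eps, 0 < eps -> exists r, S r /\ r < d + eps.
Proof.
  intros [r0 Sr0] Hpos.
  destruct (completeness (fun r => S (- r))) as [m [Hub Hlub]].
  { exists 0; intros r Sr; specialize (Hpos _ Sr); lra. }
  { exists (- r0); rewrite Ropp_involutive; exact Sr0. }
  assert (Hinf : forall eps, 0 < eps -> exists r, S r /\ r < - m + eps).
  { intros eps He; apply NNPP; intro Hno.
    assert (m <= m - eps); [|lra].
    apply Hlub; intros r Sr; apply Rnot_lt_le; intro; apply Hno; exists (- r); split; auto; lra. }
  exists (- m); split; [|split; auto].
  - apply Rnot_lt_le; intro Hlt; destruct (Hinf m) as [r [Sr Hr]]; [lra|].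
    specialize (Hpos r Sr); lra.
  - intros r Sr; assert (- r <= m) by (apply Hub; rewrite Ropp_involutive; exact Sr); lra.
Qed.

(** * Projection onto closed convex sets and separation *)

Section ClosedConvex.
Variable X : HilbertSpace.
Implicit Types A C K : X -> Prop.
Implicit Types x y z : X.

Lemma closure_iff A x :
  closure (HOps X) A x <-> forall eps, 0 < eps -> exists y, A y /\ nrm (x ⊖ y) < eps.
Proof. reflexivity. Qed.

Lemma subset_closure A x : A x -> closure (HOps X) A x.
Proof.
  intros Ax eps He; exists x; split; auto.
  change (nrm (x ⊖ x) < eps); rewrite hsubrr, hnorm_0; lra.
Qed.

Lemma closure_mono A B :
  (forall x, A x -> B x) -> forall x, closure (HOps X) A x -> closure (HOps X) B x.
Proof. intros AB x Hx eps He; destruct (Hx eps He) as [y [Ay Hy]]; exists y; auto. Qed.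

Lemma closure_idem A x : closure (HOps X) (closure (HOps X) A) x -> closure (HOps X) A x.
Proof.
  rewrite !closure_iff; intros Hx eps He.
  destruct (Hx (eps / 2)) as [y [Hy Hxy]]; [lra|].
  rewrite closure_iff in Hy; destruct (Hy (eps / 2)) as [w [Aw Hyw]]; [lra|].
  exists w; split; auto; pose proof (hnorm_sub_triangle X x y w); lra.
Qed.

Lemma closure_dist_ge A x delta :
  (forall y, A y -> delta <= nrm (x ⊖ y)) -> forall y, closure (HOps X) A y -> delta <= nrm (x ⊖ y).
Proof.
  intros Hd y Hy; apply Rnot_lt_le; intro Hlt.
  destruct (Hy (delta - nrm (x ⊖ y))) as [w [Aw Hw]]; [lra|].
  change (nrm (y ⊖ w) < delta - nrm (x ⊖ y)) in Hw.
  pose proof (hnorm_sub_triangle X x y w); specialize (Hd w Aw); lra.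
Qed.

Lemma is_closed_closure A : is_closed (HOps X) (closure (HOps X) A).
Proof.
  intros x Nx.
  assert (exists eps, 0 < eps /\ forall y, A y -> eps <= nrm (x ⊖ y)) as [eps [He Hy]].
  { apply NNPP; intro Hn; apply Nx; intros eps He; apply NNPP; intro Hm; apply Hn.
    exists eps; split; auto; intros y Ay; apply Rnot_lt_le; intro; apply Hm; exists y; auto. }
  exists eps; split; auto; exact (closure_dist_ge A x eps Hy).
Qed.

Lemma closure_lincomb A B D s t :
  (forall a b, A a -> B b -> D (s ⊙ a ⊕ t ⊙ b)) ->
  forall a b, closure (HOps X) A a -> closure (HOps X) B b -> closure (HOps X) D (s ⊙ a ⊕ t ⊙ b).
Proof.
  intros Hst a b Ha Hb eps He.
  set (M := Rabs s + Rabs t + 1).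
  assert (HM : 0 < M) by (unfold M; pose proof (Rabs_pos s); pose proof (Rabs_pos t); lra).
  destruct (Ha (eps / M)) as [a' [Aa' Ha']]; [apply Rdiv_lt_0_compat; lra|].
  destruct (Hb (eps / M)) as [b' [Bb' Hb']]; [apply Rdiv_lt_0_compat; lra|].
  exists (s ⊙ a' ⊕ t ⊙ b'); split; [auto|].
  change (nrm ((s ⊙ a ⊕ t ⊙ b) ⊖ (s ⊙ a' ⊕ t ⊙ b')) < eps).
  change (nrm (a ⊖ a') < eps / M) in Ha'; change (nrm (b ⊖ b') < eps / M) in Hb'.
  replace ((s ⊙ a ⊕ t ⊙ b) ⊖ (s ⊙ a' ⊕ t ⊙ b')) with (s ⊙ (a ⊖ a') ⊕ t ⊙ (b ⊖ b'))
    by (hvec_eq; ring).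
  eapply Rle_lt_trans; [apply hnorm_add|]; rewrite !hnorm_scal.
  assert (eps = M * (eps / M)) by (field; lra).
  replace (M * (eps / M)) with (Rabs s * (eps / M) + Rabs t * (eps / M) + eps / M)
    in H by (unfold M; ring).
  assert (0 < eps / M) by (apply Rdiv_lt_0_compat; lra).
  assert (Rabs s * nrm (a ⊖ a') <= Rabs s * (eps / M))
    by (apply Rmult_le_compat_l; [apply Rabs_pos|lra]).
  assert (Rabs t * nrm (b ⊖ b') <= Rabs t * (eps / M))
    by (apply Rmult_le_compat_l; [apply Rabs_pos|lra]).
  lra.
Qed.

Lemma closure_convex A : is_convex (HOps X) A -> is_convex (HOps X) (closure (HOps X) A).
Proof.
  intros Acv x y t Hx Hy Ht; apply (closure_lincomb A A A); auto.
  intros a b Aa Ab; apply Acv; auto.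
Qed.

Lemma closure_cone A : is_cone (HOps X) A -> is_cone (HOps X) (closure (HOps X) A).
Proof.
  intros Acn t x Ht Hx; change (closure (HOps X) A (t ⊙ x)).
  replace (t ⊙ x) with (t ⊙ x ⊕ 0 ⊙ x) by (hvec_eq; ring).
  apply (closure_lincomb A A A); auto; intros a b Aa _.
  replace (t ⊙ a ⊕ 0 ⊙ b) with (t ⊙ a) by (hvec_eq; ring); apply Acn; auto.
Qed.

Lemma closure_subspace A :
  is_linear_subspace (HOps X) A -> is_linear_subspace (HOps X) (closure (HOps X) A).
Proof.
  intros [A0 [Aadd Ascal]]; split; [|split].
  - apply subset_closure, A0.
  - intros x y Hx Hy; change (closure (HOps X) A (x ⊕ y)).
    replace (x ⊕ y) with (1 ⊙ x ⊕ 1 ⊙ y) by (hvec_eq; ring).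
    apply (closure_lincomb A A A); auto; intros a b Aa Ab; apply Aadd; apply Ascal; auto.
  - intros t x Hx; change (closure (HOps X) A (t ⊙ x)).
    replace (t ⊙ x) with (t ⊙ x ⊕ 0 ⊙ x) by (hvec_eq; ring).
    apply (closure_lincomb A A A); auto; intros a b Aa Ab; apply Aadd; apply Ascal; auto.
Qed.

Lemma parallelogram x y y' :
  ⟪y ⊖ y', y ⊖ y'⟫ =
  2 * ⟪x ⊖ y, x ⊖ y⟫ + 2 * ⟪x ⊖ y', x ⊖ y'⟫
  - 4 * ⟪x ⊖ ((/ 2) ⊙ y ⊕ (/ 2) ⊙ y'), x ⊖ ((/ 2) ⊙ y ⊕ (/ 2) ⊙ y')⟫.
Proof. hexpand; rewrite (hinner_sym X y' y), (hinner_sym X y x), (hinner_sym X y' x); field. Qed.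

Lemma near_minimizers_close C x d y y' e :
  is_convex (HOps X) C -> (forall z, C z -> d <= nrm (x ⊖ z)) -> 0 <= d ->
  C y -> C y' -> 0 <= e <= 1 -> nrm (x ⊖ y) <= d + e * e -> nrm (x ⊖ y') <= d + e * e ->
  nrm (y ⊖ y') <= sqrt (8 * d + 4) * e.
Proof.
  intros Ccv Hd Hd0 Cy Cy' He Hy Hy'.
  set (m := (/ 2) ⊙ y ⊕ (/ 2) ⊙ y').
  assert (Cm : C m).
  { unfold m; replace (/ 2) with (1 - / 2) at 2 by field; apply Ccv; auto; lra. }
  pose proof (Hd m Cm) as Hm.
  pose proof (parallelogram x y y') as P; fold m in P; rewrite <- !hnorm_sqr in P.
  pose proof (hnorm_ge0 X (x ⊖ y)); pose proof (hnorm_ge0 X (x ⊖ y')).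
  pose proof (hnorm_ge0 X (y ⊖ y')); pose proof (sqrt_pos (8 * d + 4)).
  pose proof (sqrt_sqrt (8 * d + 4) ltac:(lra)).
  assert (nrm (x ⊖ y) * nrm (x ⊖ y) <= (d + e * e) * (d + e * e)) by (apply Rmult_le_compat; lra).
  assert (nrm (x ⊖ y') * nrm (x ⊖ y') <= (d + e * e) * (d + e * e)) by (apply Rmult_le_compat; lra).
  assert (d * d <= nrm (x ⊖ m) * nrm (x ⊖ m)) by (apply Rmult_le_compat; lra).
  assert (e * e * (e * e) <= e * e) by (assert (e * e <= 1) by nra; nra).
  assert (Sq : nrm (y ⊖ y') * nrm (y ⊖ y') <= (sqrt (8 * d + 4) * e) * (sqrt (8 * d + 4) * e)).
  { replace (sqrt (8 * d + 4) * e * (sqrt (8 * d + 4) * e))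
      with (sqrt (8 * d + 4) * sqrt (8 * d + 4) * (e * e)) by ring.
    nra. }
  assert (0 <= sqrt (8 * d + 4) * e) by nra.
  nra.
Qed.

Lemma exists_nearest_point C x :
  is_closed (HOps X) C -> is_convex (HOps X) C -> (exists c, C c) ->
  exists p, C p /\ forall y, C y -> nrm (x ⊖ p) <= nrm (x ⊖ y).
Proof.
  intros Ccl Ccv [c0 Cc0].
  destruct (real_inf (fun r => exists y, C y /\ r = nrm (x ⊖ y))) as [d [Hd0 [Hd Hinf]]].
  { exists (nrm (x ⊖ c0)), c0; auto. }
  { intros r [y [_ ->]]; apply hnorm_ge0. }
  assert (Dist : forall y, C y -> d <= nrm (x ⊖ y)) by (intros y Cy; apply Hd; eauto).
  destruct (seq_choice X (fun n y => C y /\ nrm (x ⊖ y) <= d + (/2)^n * (/2)^n)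
    (fun _ _ _ => True)) as [f Hf].
  { destruct (Hinf 1) as [r [[y [Cy ->]] Hr]]; [lra|]; exists y; simpl; split; auto; lra. }
  { intros n _ _; destruct (Hinf ((/2)^(S n) * (/2)^(S n))) as [r [[y [Cy ->]] Hr]].
    - pose proof (half_pow_pos (S n)); nra.
    - exists y; split; auto; split; auto; lra. }
  set (K := sqrt (8 * d + 4)).
  assert (HK : 0 <= K) by apply sqrt_pos.
  destruct (geometric_cauchy_limit X f (fun k => K * (/2)^k) K) as [p Hp].
  { exact HK. }
  { intro; lra. }
  { intros k j Hkj; rewrite hnorm_subC.
    destruct (Hf k) as [[Ck Hk] _]; destruct (Hf j) as [[Cj Hj] _].
    pose proof (half_pow_antimono k j Hkj); pose proof (half_pow_pos j).
    pose proof (half_pow_le1 k).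
    apply (near_minimizers_close C x d); auto; [lra|].
    assert ((/2)^j * (/2)^j <= (/2)^k * (/2)^k) by (apply Rmult_le_compat; lra); lra. }
  exists p; split.
  - apply (closed_geometric_limit X C f p K Ccl); auto; intro k; apply (Hf k).
  - intros y Cy; apply Rle_trans with d; [|apply Dist; auto].
    apply (le_of_le_geometric _ _ (K + 1)); [lra|]; intro k.
    destruct (Hf k) as [[_ Hk] _]; pose proof (Hp k).
    pose proof (hnorm_sub_triangle X x (f k) p).
    pose proof (half_pow_pos k); pose proof (half_pow_le1 k).
    assert ((/2)^k * (/2)^k <= (/2)^k) by nra; lra.
Qed.

Lemma nearest_point_variational C x p :
  is_convex (HOps X) C -> C p -> (forall y, C y -> nrm (x ⊖ p) <= nrm (x ⊖ y)) ->
  forall y, C y -> ⟪x ⊖ p, y ⊖ p⟫ <= 0.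
Proof.
  intros Ccv Cp Hmin y Cy.
  assert (Quad : forall t, 0 < t <= 1 ->
      2 * ⟪x ⊖ p, y ⊖ p⟫ + t * (- ⟪y ⊖ p, y ⊖ p⟫) + t * t * 0 <= 0).
  { intros t Ht.
    assert (Ct : C (t ⊙ y ⊕ (1 - t) ⊙ p)) by (apply Ccv; auto; lra).
    pose proof (Hmin _ Ct) as Hle.
    pose proof (hnorm_ge0 X (x ⊖ p)).
    assert (Sq : ⟪x ⊖ p, x ⊖ p⟫ <= ⟪x ⊖ (t ⊙ y ⊕ (1 - t) ⊙ p), x ⊖ (t ⊙ y ⊕ (1 - t) ⊙ p)⟫)
      by (rewrite <- !hnorm_sqr; apply Rmult_le_compat; lra).
    replace (x ⊖ (t ⊙ y ⊕ (1 - t) ⊙ p)) with ((x ⊖ p) ⊕ (- t) ⊙ (y ⊖ p)) in Sq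
      by (hvec_eq; ring).
    rewrite hinner_addl, !hinner_addr, !hinner_scall, !hinner_scalr,
      (hinner_sym X (y ⊖ p) (x ⊖ p)) in Sq.
    nra. }
  pose proof (quadratic_le0_near0 _ _ _ Quad); lra.
Qed.

Theorem projection_closed_convex C x :
  is_closed (HOps X) C -> is_convex (HOps X) C -> (exists c, C c) ->
  exists p, C p /\ forall y, C y -> ⟪x ⊖ p, y ⊖ p⟫ <= 0.
Proof.
  intros Ccl Ccv Cne; destruct (exists_nearest_point C x Ccl Ccv Cne) as [p [Cp Hp]].
  exists p; split; auto; exact (nearest_point_variational C x p Ccv Cp Hp).
Qed.

Theorem cone_separation K x :
  is_convex (HOps X) K -> is_cone (HOps X) K -> (exists k, K k) ->
  (exists delta, 0 < delta /\ forall k, K k -> delta <= nrm (x ⊖ k)) ->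
  exists q, (forall k, K k -> ⟪q, k⟫ <= 0) /\ 0 < ⟪q, x⟫.
Proof.
  intros Kcv Kcn [k0 Kk0] [delta [Hdelta Hdist]].
  set (C := closure (HOps X) K).
  assert (Ccv : is_convex (HOps X) C) by (apply closure_convex; auto).
  assert (Ccn : is_cone (HOps X) C) by (apply closure_cone; auto).
  destruct (projection_closed_convex C x) as [p [Cp Hp]].
  { apply is_closed_closure. }
  { exact Ccv. }
  { exists k0; apply subset_closure; auto. }
  assert (Hq0 : ⟪x ⊖ p, p⟫ = 0).
  { pose proof (Hp _ (Ccn 0 p ltac:(lra) Cp)) as H0.
    pose proof (Hp _ (Ccn 2 p ltac:(lra) Cp)) as H2.
    change (⟪x ⊖ p, 0 ⊙ p ⊖ p⟫ <= 0) in H0; change (⟪x ⊖ p, 2 ⊙ p ⊖ p⟫ <= 0) in H2.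
    replace (0 ⊙ p ⊖ p) with ((-1) ⊙ p) in H0 by (hvec_eq; ring).
    replace (2 ⊙ p ⊖ p) with p in H2 by (hvec_eq; ring).
    rewrite hinner_scalr in H0; lra. }
  exists (x ⊖ p); split.
  - intros k Kk.
    assert (Cpk : C (p ⊕ k)).
    { replace (p ⊕ k) with (2 ⊙ ((/ 2) ⊙ p ⊕ (1 - / 2) ⊙ k)) by (hvec_eq; field).
      apply Ccn; [lra|apply Ccv; [exact Cp|apply subset_closure; exact Kk|lra]]. }
    pose proof (Hp _ Cpk) as Hk.
    replace (p ⊕ k ⊖ p) with k in Hk by (hvec_eq; ring); exact Hk.
  - pose proof (closure_dist_ge K x delta Hdist p Cp) as Hd.
    assert (E : ⟪x ⊖ p, x⟫ = ⟪x ⊖ p, x ⊖ p⟫ + ⟪x ⊖ p, p⟫) by (hexpand; ring).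
    rewrite E, Hq0, <- hnorm_sqr; nra.
Qed.
End ClosedConvex.

(** * Quasi-relative interiors *)

Section QuasiRelativeInterior.
Variable X : HilbertSpace.
Implicit Types A C : X -> Prop.
Implicit Types x y v : X.

Lemma cone_gen_iff C x v :
  cone_gen (HOps X) C x v <-> exists t a, 0 <= t /\ C a /\ v = t ⊙ (a ⊖ x).
Proof. reflexivity. Qed.

Lemma linear_subspace_ext A B :
  (forall v, A v <-> B v) -> is_linear_subspace (HOps X) A -> is_linear_subspace (HOps X) B.
Proof.
  intros AB [A0 [Aadd Ascal]]; split; [|split].
  - apply AB, A0.
  - intros x y Bx By; apply AB, Aadd; apply AB; auto.
  - intros t x Bx; apply AB, Ascal, AB; auto.
Qed.

Lemma closure_ext A B :
  (forall v, A v -> B v) -> (forall v, B v -> closure (HOps X) A v) ->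
  forall v, closure (HOps X) A v <-> closure (HOps X) B v.
Proof.
  intros AB BA v; split; [apply closure_mono; auto|].
  intro Bv; apply closure_idem; exact (closure_mono X B _ BA v Bv).
Qed.

Lemma qri_segment C x0 y t :
  is_convex (HOps X) C -> qri (HOps X) C x0 -> C y -> 0 < t <= 1 ->
  qri (HOps X) C (t ⊙ x0 ⊕ (1 - t) ⊙ y).
Proof.
  intros Ccv [Cx0 [L0 [Ladd Lscal]]] Cy Ht.
  set (xt := t ⊙ x0 ⊕ (1 - t) ⊙ y).
  set (L := closure (HOps X) (cone_gen (HOps X) C x0)).
  assert (Cxt : C xt) by (apply Ccv; auto; lra).
  split; [exact Cxt|].
  assert (Lcone : forall a, C a -> L (a ⊖ x0)).
  { intros a Ca; apply subset_closure; rewrite cone_gen_iff.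
    exists 1, a; rewrite hscal_1; auto with real. }
  apply (linear_subspace_ext L); [|repeat split; auto].
  apply closure_ext.
  - intros v Hv; rewrite cone_gen_iff in Hv; destruct Hv as [s [a [Hs [Ca ->]]]].
    rewrite cone_gen_iff; exists (s / t), (t ⊙ a ⊕ (1 - t) ⊙ y); repeat split.
    + apply Rmult_le_pos; [lra|apply Rlt_le, Rinv_0_lt_compat; lra].
    + apply Ccv; auto; lra.
    + unfold xt; hvec_eq; field; lra.
  - intros v Hv; rewrite cone_gen_iff in Hv; destruct Hv as [s [a [Hs [Ca ->]]]].
    replace (s ⊙ (a ⊖ xt)) with (s ⊙ (a ⊖ x0) ⊕ (s * (t - 1)) ⊙ (y ⊖ x0))
      by (unfold xt; hvec_eq; ring).
    apply Ladd; apply Lscal; apply Lcone; auto.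
Qed.

Lemma qri_scale C x s : is_cone (HOps X) C -> qri (HOps X) C x -> 0 < s -> qri (HOps X) C (s ⊙ x).
Proof.
  intros Ccn [Cx Lsub] Hs; split; [apply Ccn; auto; lra|].
  apply (linear_subspace_ext (closure (HOps X) (cone_gen (HOps X) C x))); auto.
  apply closure_ext; intros v Hv; [|apply subset_closure];
    rewrite cone_gen_iff in Hv; destruct Hv as [t [a [Ht [Ca ->]]]]; rewrite cone_gen_iff.
  - exists (t / s), (s ⊙ a); repeat split.
    + apply Rmult_le_pos; [lra|apply Rlt_le, Rinv_0_lt_compat; lra].
    + apply Ccn; auto; lra.
    + hvec_eq; field; lra.
  - exists (t * s), (/ s ⊙ a); repeat split.
    + nra.
    + apply Ccn; auto; apply Rlt_le, Rinv_0_lt_compat; lra.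
    + hvec_eq; field; lra.
Qed.
End QuasiRelativeInterior.

Section PairSets.
Variable H : HilbertSpace.

Lemma closure_snd (A : HPair H -> Prop) k :
  closure (HOps (HPair H)) A k ->
  closure (HOps H) (fun v => exists k', A k' /\ v = snd k') (snd k).
Proof.
  intros Hk eps He; destruct (Hk eps He) as [k' [Ak' Hkk']].
  exists (snd k'); split; [eauto|].
  destruct k as [a b], k' as [a' b'].
  exact (Rle_lt_trans _ _ _ (hnorm_snd_le H (a ⊖ a') (b ⊖ b')) Hkk').
Qed.

Lemma qri_Proj_z (N : H * H -> Prop) p :
  qri (PairOps H) N p -> qri (HOps H) (Proj_z H N) (snd p).
Proof.
  intros [Np Ksub]; split; [exists (fst p); destruct p; exact Np|].
  change (is_linear_subspace (HOps (HPair H))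
    (closure (HOps (HPair H)) (cone_gen (HOps (HPair H)) N p))) in Ksub.
  set (K := closure (HOps (HPair H)) (cone_gen (HOps (HPair H)) N p)) in Ksub.
  (* snd K is a subspace lying between cone (Proj_z N - snd p) and its closure *)
  set (S := fun v => exists k, K k /\ v = snd k).
  assert (Ssub : is_linear_subspace (HOps H) S).
  { destruct Ksub as [K0 [Kadd Kscal]]; split; [|split].
    - exists (hzero (HPair H)); auto.
    - intros x y [k [Kk ->]] [k' [Kk' ->]]; exists (k ⊕ k'); split; auto; apply Kadd; auto.
    - intros t x [k [Kk ->]]; exists (t ⊙ k); split; auto; apply Kscal; auto. }
  apply (linear_subspace_ext H (closure (HOps H) S)); [|apply closure_subspace; exact Ssub].
  intro v; symmetry; apply closure_ext.
  - intros w Hw; rewrite cone_gen_iff in Hw; destruct Hw as [t [a [Ht [[b Nba] ->]]]].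
    exists (t ⊙ (((b, a) : HPair H) ⊖ p)); split; [|reflexivity].
    apply subset_closure; exists t, (b, a); auto.
  - intros w [k [Kk ->]].
    apply (closure_mono H (fun v => exists k', cone_gen (HOps (HPair H)) N p k' /\ v = snd k'));
      [|exact (closure_snd _ k Kk)].
    intros w [[a b] [[t [[c d] [Ht [Ncd ->]]]] ->]]; rewrite cone_gen_iff.
    exists t, d; repeat split; auto; exists c; exact Ncd.
Qed.

Lemma polar_cone (T : H * H -> Prop) : is_cone (PairOps H) (polar H T).
Proof.
  intros t [a b] Ht Hp h z Thz; simpl; rewrite !hinner_scall.
  specialize (Hp h z Thz); simpl in Hp; nra.
Qed.

Lemma polar_convex (T : H * H -> Prop) : is_convex (PairOps H) (polar H T).
Proof.
  intros [a b] [c d] t Hp Hq Ht h z Thz; simpl; hexpand.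
  specialize (Hp h z Thz); specialize (Hq h z Thz); simpl in *; nra.
Qed.

Lemma Proj_z_cone (N : H * H -> Prop) : is_cone (PairOps H) N -> is_cone (HOps H) (Proj_z H N).
Proof. intros Ncn t z Ht [h Nhz]; exists (t ⊙ h); exact (Ncn t (h, z) Ht Nhz). Qed.
End PairSets.

(** * Bounded selections of a closed convex relation at an sqri point *)

Section ConvexRelation.
Variables (H : HilbertSpace) (C : H * H -> Prop).
Hypothesis C_closed : is_closed (PairOps H) C.
Hypothesis C_convex : is_convex (PairOps H) C.

Lemma convex_pair t w1 z1 w2 z2 : 0 <= t <= 1 -> C (w1, z1) -> C (w2, z2) ->
  C (t ⊙ w1 ⊕ (1 - t) ⊙ w2, t ⊙ z1 ⊕ (1 - t) ⊙ z2).
Proof. intros Ht C1 C2; exact (C_convex (w1, z1) (w2, z2) t C1 C2 Ht). Qed.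

Definition dom_bounded (m : R) (w : H) : Prop := exists z, C (w, z) /\ nrm z <= m.

Lemma dom_bounded_mono m m' w : m <= m' -> dom_bounded m w -> dom_bounded m' w.
Proof. intros Hm [z [Cwz Hz]]; exists z; split; [exact Cwz|lra]. Qed.

Lemma dom_bounded_convex t m1 m2 w1 w2 : 0 <= t <= 1 ->
  dom_bounded m1 w1 -> dom_bounded m2 w2 ->
  dom_bounded (t * m1 + (1 - t) * m2) (t ⊙ w1 ⊕ (1 - t) ⊙ w2).
Proof.
  intros Ht [z1 [C1 Hz1]] [z2 [C2 Hz2]]; exists (t ⊙ z1 ⊕ (1 - t) ⊙ z2); split.
  - apply convex_pair; auto.
  - eapply Rle_trans; [apply hnorm_add|]; rewrite !hnorm_scal_nonneg by lra.
    apply Rplus_le_compat; apply Rmult_le_compat_l; lra.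
Qed.

Section AtSqriPoint.
Variable h : H.
Hypothesis h_sqri : sqri (HOps H) (Proj_h H C) h.

Let L := cone_gen (HOps H) (Proj_h H C) h.

Lemma L_closed : is_closed (HOps H) L.
Proof. apply h_sqri. Qed.

Lemma L_subspace : is_linear_subspace (HOps H) L.
Proof. apply h_sqri. Qed.

Lemma L_add u v : L u -> L v -> L (u ⊕ v).
Proof. apply L_subspace. Qed.

Lemma L_scal t u : L u -> L (t ⊙ u).
Proof. apply L_subspace. Qed.

Lemma dom_sub_in_L w z : C (w, z) -> L (w ⊖ h).
Proof.
  intro Cwz; unfold L; rewrite cone_gen_iff; exists 1, w; rewrite hscal_1.
  repeat split; [lra|exists z; exact Cwz].
Qed.

Lemma L_covered v : L v -> exists n, dom_bounded (INR (S n)) (h ⊕ / INR (S n) ⊙ v).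
Proof.
  destruct h_sqri as [[zh Chzh] _].
  intro Lv; unfold L in Lv; rewrite cone_gen_iff in Lv.
  destruct Lv as [s [d [Hs [[zd Cdzd] ->]]]].
  destruct (INR_archimed 1 (s + nrm zh + nrm zd)) as [n Hn]; [lra|].
  exists n; set (N := INR (S n)).
  assert (HN : INR n + 1 = N) by (unfold N; rewrite S_INR; reflexivity).
  pose proof (hnorm_ge0 H zh); pose proof (hnorm_ge0 H zd).
  set (a := s / N).
  assert (Ha : 0 <= a <= 1).
  { unfold a; split; [apply Rmult_le_pos; [lra|apply Rlt_le, Rinv_0_lt_compat; lra]|].
    apply Rmult_le_reg_r with N; [lra|]; unfold Rdiv; rewrite Rmult_assoc, Rinv_l; lra. }
  replace (h ⊕ / N ⊙ (s ⊙ (d ⊖ h))) with (a ⊙ d ⊕ (1 - a) ⊙ h) by (unfold a; hvec_eq; field; lra).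
  apply (dom_bounded_mono (a * N + (1 - a) * N)); [lra|].
  apply dom_bounded_convex; auto; [exists zd|exists zh]; split; auto; lra.
Qed.

(* Baire gives a ball around some c in L on which h + v/a is approximately reachable;
   averaging with the reachable point h - c/b recentres that ball at 0. *)
Lemma approx_selection : exists r m, 0 < r /\ 0 <= m /\
  forall u, L u -> nrm u < r -> closure (HOps H) (dom_bounded m) (h ⊕ u).
Proof.
  set (G n v := closure (HOps H) (dom_bounded (INR (S n))) (h ⊕ / INR (S n) ⊙ v)).
  destruct (baire H L G L_closed) as [n [c [rho [Lc [Hrho Ball]]]]].
  { exists (hzero H); apply L_subspace. }
  { intro n; apply (is_closed_affine_preimage H _ h (/ INR (S n)));
      [apply Rinv_0_lt_compat, lt_0_INR; lia|apply is_closed_closure]. }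
  { intros v Lv; destruct (L_covered v Lv) as [n Hn]; exists n; apply subset_closure, Hn. }
  destruct (L_covered _ (L_scal (-1) c Lc)) as [k Hk].
  set (a := INR (S n)) in *; set (b := INR (S k)) in *.
  assert (Ha : 0 < a) by (apply lt_0_INR; lia); assert (Hb : 0 < b) by (apply lt_0_INR; lia).
  exists (rho / (a + b)), (a + b); repeat split; [apply Rdiv_lt_0_compat; lra|lra|].
  intros u Lu Hu.
  set (v := c ⊕ (a + b) ⊙ u).
  assert (Gv : G n v).
  { apply Ball; [apply L_add; [exact Lc|apply L_scal, Lu]|].
    replace (v ⊖ c) with ((a + b) ⊙ u) by (unfold v; hvec_eq; ring).
    rewrite hnorm_scal_nonneg by lra.
    apply Rmult_lt_reg_l with (/ (a + b)); [apply Rinv_0_lt_compat; lra|].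
    replace (/ (a + b) * ((a + b) * nrm u)) with (nrm u) by (field; lra).
    replace (/ (a + b) * rho) with (rho / (a + b)) by (field; lra); exact Hu. }
  set (lam := a / (a + b)).
  assert (Hlam : 0 <= lam <= 1).
  { unfold lam; split; [apply Rmult_le_pos; [lra|apply Rlt_le, Rinv_0_lt_compat; lra]|].
    apply Rmult_le_reg_r with (a + b); [lra|]; unfold Rdiv; rewrite Rmult_assoc, Rinv_l; lra. }
  replace (h ⊕ u) with (lam ⊙ (h ⊕ / a ⊙ v) ⊕ (1 - lam) ⊙ (h ⊕ / b ⊙ ((-1) ⊙ c)))
    by (unfold lam, v; hvec_eq; field; lra).
  apply (closure_lincomb H (dom_bounded a) (dom_bounded b)); [|exact Gv|apply subset_closure, Hk].
  intros w1 w2 D1 D2; apply (dom_bounded_mono (lam * a + (1 - lam) * b)); [nra|].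
  apply dom_bounded_convex; auto.
Qed.

Section Iteration.
Variables (r m : R).
Hypothesis r_pos : 0 < r.
Hypothesis m_ge0 : 0 <= m.
Hypothesis approx : forall u, L u -> nrm u < r -> closure (HOps H) (dom_bounded m) (h ⊕ u).

Lemma selection_step u lam w z :
  L u -> nrm u < r / 2 -> 0 < lam <= 1 -> C (w, z) -> nrm z <= m ->
  nrm (h ⊕ u ⊖ w) < lam * (r / 2) ->
  exists w' z', C (w', z') /\ nrm z' <= m /\ nrm (h ⊕ u ⊖ w') < lam / 2 * (r / 2) /\
    nrm (z' ⊖ z) <= 2 * m * lam.
Proof.
  intros Lu Hu Hlam Cwz Hz Hw.
  set (y := h ⊕ u) in *.
  set (v := u ⊕ (/ lam - 1) ⊙ (y ⊖ w)).
  assert (Lv : L v).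
  { apply L_add; [exact Lu|apply L_scal].
    replace (y ⊖ w) with (u ⊕ (-1) ⊙ (w ⊖ h)) by (unfold y; hvec_eq; ring).
    apply L_add; [exact Lu|apply L_scal, (dom_sub_in_L w z Cwz)]. }
  assert (Hv : nrm v < r).
  { assert (Hinv : 1 <= / lam) by (rewrite <- Rinv_1; apply Rinv_le_contravar; lra).
    unfold v; eapply Rle_lt_trans; [apply hnorm_add|].
    rewrite hnorm_scal_nonneg by lra.
    assert ((/ lam - 1) * nrm (y ⊖ w) <= / lam * nrm (y ⊖ w))
      by (pose proof (hnorm_ge0 H (y ⊖ w)); nra).
    assert (/ lam * nrm (y ⊖ w) < r / 2).
    { apply Rmult_lt_reg_l with lam; [lra|].
      rewrite <- Rmult_assoc, Rinv_r, Rmult_1_l by lra; exact Hw. }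
    lra. }
  destruct (approx v Lv Hv (r / 4)) as [w1 [[z1 [Cwz1 Hz1]] Hw1]]; [lra|].
  change (nrm (h ⊕ v ⊖ w1) < r / 4) in Hw1.
  exists ((1 - lam) ⊙ w ⊕ lam ⊙ w1), ((1 - lam) ⊙ z ⊕ lam ⊙ z1); repeat split.
  - replace lam with (1 - (1 - lam)) at 2 4 by ring; apply convex_pair; auto; lra.
  - eapply Rle_trans; [apply hnorm_add|]; rewrite !hnorm_scal_nonneg by lra; nra.
  - replace (y ⊖ ((1 - lam) ⊙ w ⊕ lam ⊙ w1)) with (lam ⊙ (h ⊕ v ⊖ w1))
      by (unfold v, y; hvec_eq; field; lra).
    rewrite hnorm_scal_nonneg by lra; nra.
  - replace ((1 - lam) ⊙ z ⊕ lam ⊙ z1 ⊖ z) with (lam ⊙ (z1 ⊖ z)) by (hvec_eq; ring).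
    rewrite hnorm_scal_nonneg by lra.
    pose proof (hnorm_sub_le H z1 z); nra.
Qed.

Lemma exact_selection u : L u -> nrm u < r / 2 -> exists z, C (h ⊕ u, z) /\ nrm z <= m.
Proof.
  intros Lu Hu; set (y := h ⊕ u).
  destruct (seq_choice (H * H)
    (fun k p => C p /\ nrm (snd p) <= m /\ nrm (y ⊖ fst p) < (/2)^k * (r / 2))
    (fun k p p' => nrm (snd p' ⊖ snd p) <= 2 * m * (/2)^k)) as [f Hf].
  { destruct (approx u Lu ltac:(lra) (r / 2)) as [w [[z [Cwz Hz]] Hw]]; [lra|].
    exists (w, z); simpl; repeat split; auto; change (nrm (y ⊖ w) < r / 2) in Hw; lra. }
  { intros k [w z] [Cwz [Hz Hw]]; cbn [fst snd] in *.
    destruct (selection_step u ((/2)^k) w z Lu Hu) as [w' [z' [Cwz' [Hz' [Hw' Hzz']]]]]; auto.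
    - split; [apply half_pow_pos|apply half_pow_le1].
    - exists (w', z'); cbn [fst snd]; rewrite half_pow_S; repeat split; auto; lra. }
  set (w k := fst (f k)); set (z k := snd (f k)).
  assert (Hz_cauchy : forall k j, (k <= j)%nat -> nrm (z j ⊖ z k) <= 4 * m * ((/2)^k - (/2)^j)).
  { induction 1; [rewrite hsubrr, hnorm_0; lra|].
    pose proof (hnorm_sub_triangle H (z (S m0)) (z m0) (z k)).
    destruct (Hf m0) as [_ Hstep]; fold (z m0) (z (S m0)) in Hstep.
    rewrite half_pow_S; lra. }
  destruct (geometric_cauchy_limit H z (fun k => 4 * m * (/2)^k) (4 * m)) as [zl Hzl].
  { lra. }
  { intro; lra. }
  { intros k j Hkj; pose proof (Hz_cauchy k j Hkj); pose proof (half_pow_pos j); nra. }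
  exists zl; split.
  - apply (closed_geometric_limit (HPair H) C f (y, zl) (r / 2 + 4 * m) C_closed);
      [intro k; apply (Hf k)|intro k].
    destruct (Hf k) as [[_ [_ Hwk]] _]; fold (w k) in Hwk.
    change (hnorm (HPair H) (w k ⊖ y, z k ⊖ zl) <= (r / 2 + 4 * m) * (/2)^k).
    pose proof (hnorm_pair_le H (w k ⊖ y) (z k ⊖ zl)); pose proof (Hzl k).
    rewrite hnorm_subC in Hwk; lra.
  - apply (le_of_le_geometric _ _ (4 * m)); [lra|intro k].
    destruct (Hf k) as [[_ [Hzk _]] _]; fold (z k) in Hzk.
    pose proof (hnorm_le_add_sub H (z k) zl); pose proof (Hzl k); lra.
Qed.
End Iteration.

Theorem sqri_bounded_selection : exists r m, 0 < r /\ 0 <= m /\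
  forall u, L u -> nrm u < r -> exists z, C (h ⊕ u, z) /\ nrm z <= m.
Proof.
  destruct approx_selection as [r [m [Hr [Hm Happrox]]]].
  exists (r / 2), m; repeat split; [lra|exact Hm|].
  exact (exact_selection r m Hr Hm Happrox).
Qed.
End AtSqriPoint.
End ConvexRelation.

(** * (i) implies (ii) *)

Section FirstImpliesSecond.
Variables (H : HilbertSpace) (T : H * H -> Prop).
Hypothesis T_closed : is_closed (PairOps H) T.
Hypothesis T_convex : is_convex (PairOps H) T.
Hypothesis T_cone : is_cone (PairOps H) T.

(* The cone {(w, s) : (w, z) in T, s <= <h, z>} of H x R, with R embedded in H as R h. *)
Definition hypograph_cone (h : H) : HPair H -> Prop :=
  fun q => exists w z s, T (w, z) /\ s <= ⟪h, z⟫ /\ q = (w, s ⊙ h).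

Lemma hypograph_cone_convex h : is_convex (HOps (HPair H)) (hypograph_cone h).
Proof.
  intros q1 q2 t [w1 [z1 [s1 [T1 [S1 ->]]]]] [w2 [z2 [s2 [T2 [S2 ->]]]]] Ht.
  exists (t ⊙ w1 ⊕ (1 - t) ⊙ w2), (t ⊙ z1 ⊕ (1 - t) ⊙ z2), (t * s1 + (1 - t) * s2).
  repeat split.
  - exact (convex_pair H T T_convex t w1 z1 w2 z2 Ht T1 T2).
  - rewrite hinner_addr, !hinner_scalr; nra.
  - cbn; f_equal; hvec_eq; ring.
Qed.

Lemma hypograph_cone_cone h : is_cone (HOps (HPair H)) (hypograph_cone h).
Proof.
  intros t q Ht [w [z [s [Twz [Hs ->]]]]].
  exists (t ⊙ w), (t ⊙ z), (t * s); repeat split.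
  - exact (T_cone t (w, z) Ht Twz).
  - rewrite hinner_scalr; nra.
  - cbn; f_equal; hvec_eq; ring.
Qed.

Section AtUnitSqriPoint.
Variables (h : H) (r m : R).
Hypothesis h_unit : unit_sphere H h.
Hypothesis h_sqri : sqri (HOps H) (Proj_h H T) h.
Hypothesis r_pos : 0 < r.
Hypothesis m_ge0 : 0 <= m.
Hypothesis selection : forall u, cone_gen (HOps H) (Proj_h H T) h u -> nrm u < r ->
  exists z, T (h ⊕ u, z) /\ nrm z <= m.

Lemma selection_perturb w z eta :
  T (w, z) -> 0 < eta < 1 -> nrm (h ⊖ w) < eta * r ->
  exists z', T (h, z') /\ (1 - eta) * ⟪h, z⟫ - eta * m <= ⟪h, z'⟫.
Proof.
  intros Twz Heta Hw.
  set (u := ((eta - 1) / eta) ⊙ (w ⊖ h)).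
  assert (Lu : cone_gen (HOps H) (Proj_h H T) h u)
    by (apply (L_scal H T h h_sqri), (dom_sub_in_L H T h w z Twz)).
  assert (Hu : nrm u < r).
  { unfold u; rewrite hnorm_scal, hnorm_subC.
    replace (Rabs ((eta - 1) / eta)) with ((1 - eta) / eta)
      by (rewrite Rabs_left; [field; lra|apply Rdiv_neg_pos; lra]).
    apply Rmult_lt_reg_l with eta; [lra|].
    replace (eta * ((1 - eta) / eta * nrm (h ⊖ w))) with ((1 - eta) * nrm (h ⊖ w)) by (field; lra).
    pose proof (hnorm_ge0 H (h ⊖ w)); nra. }
  destruct (selection u Lu Hu) as [zu [Tu Hzu]].
  exists (eta ⊙ zu ⊕ (1 - eta) ⊙ z); split.
  - replace h with (eta ⊙ (h ⊕ u) ⊕ (1 - eta) ⊙ w) at 1 by (unfold u; hvec_eq; field; lra).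
    apply convex_pair; auto; lra.
  - rewrite hinner_addr, !hinner_scalr.
    pose proof (cauchy_schwarz H (hopp H h) zu) as CS.
    rewrite hinner_oppl, hnorm_opp, h_unit in CS; nra.
Qed.

Lemma hypograph_cone_far beta :
  0 < beta -> (forall z, T (h, z) -> ⟪h, z⟫ < beta / 2) ->
  exists delta, 0 < delta /\ forall k, hypograph_cone h k ->
    delta <= hnorm (HPair H) (((h, (3 * beta / 4) ⊙ h) : HPair H) ⊖ k).
Proof.
  intros Hbeta Hno.
  set (eta := beta / (8 * (beta + m + 1))).
  assert (Heta : 0 < eta) by (apply Rdiv_lt_0_compat; lra).
  assert (Heta_def : eta * (beta + m + 1) = beta / 8) by (unfold eta; field; lra).
  assert (Heta1 : eta < 1) by nra.
  set (delta := Rmin (beta / 8) (eta * r)).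
  assert (Hd : 0 < delta) by (apply Rmin_pos; nra).
  exists delta; split; [exact Hd|].
  intros k [w [z [s [Twz [Hs ->]]]]]; apply Rnot_lt_le; intro Hclose.
  change (hnorm (HPair H) (h ⊖ w, (3 * beta / 4) ⊙ h ⊖ s ⊙ h) < delta) in Hclose.
  pose proof (hnorm_fst_le H (h ⊖ w) ((3 * beta / 4) ⊙ h ⊖ s ⊙ h)) as Hfst.
  pose proof (hnorm_snd_le H (h ⊖ w) ((3 * beta / 4) ⊙ h ⊖ s ⊙ h)) as Hsnd.
  assert (E : nrm ((3 * beta / 4) ⊙ h ⊖ s ⊙ h) = Rabs (3 * beta / 4 - s)).
  { replace ((3 * beta / 4) ⊙ h ⊖ s ⊙ h) with ((3 * beta / 4 - s) ⊙ h) by (hvec_eq; ring).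
    rewrite hnorm_scal, h_unit; ring. }
  rewrite E in Hsnd.
  pose proof (Rmin_l (beta / 8) (eta * r)); pose proof (Rmin_r (beta / 8) (eta * r)).
  pose proof (Rle_abs (3 * beta / 4 - s)).
  destruct (selection_perturb w z eta Twz ltac:(lra) ltac:(unfold delta in *; lra))
    as [z' [Thz' Hz']].
  specialize (Hno z' Thz').
  (* <h, z'> >= (1 - eta) (5 beta / 8) - eta m >= beta / 2 *)
  assert (5 * beta / 8 <= ⟪h, z⟫) by (unfold delta in *; lra).
  nra.
Qed.
End AtUnitSqriPoint.

Lemma hypograph_separator_polar h zh a b sigma :
  T (h, zh) -> (forall k, hypograph_cone h k -> hinner (HPair H) (a, b) k <= 0) ->
  0 < ⟪a, h⟫ + sigma * ⟪b, h⟫ -> 0 < ⟪b, h⟫ /\ polar H T (/ ⟪b, h⟫ ⊙ a, h).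
Proof.
  intros Thzh Hsep Hx; set (c := ⟪b, h⟫) in *.
  assert (HT : forall w z, T (w, z) -> ⟪a, w⟫ + ⟪h, z⟫ * c <= 0).
  { intros w z Twz.
    assert (Kw : hypograph_cone h (w, ⟪h, z⟫ ⊙ h))
      by (exists w, z, ⟪h, z⟫; repeat split; auto; lra).
    pose proof (Hsep _ Kw) as Hw; cbn in Hw; rewrite hinner_scalr in Hw; exact Hw. }
  assert (Hc0 : 0 <= c).
  { assert (K0 : hypograph_cone h (0 ⊙ h, (-1) ⊙ h)).
    { exists (0 ⊙ h), (0 ⊙ zh), (-1); repeat split.
      - exact (T_cone 0 (h, zh) ltac:(lra) Thzh).
      - rewrite hinner_scalr; lra. }
    pose proof (Hsep _ K0) as H0; cbn in H0; rewrite !hinner_scalr in H0; fold c in H0; lra. }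
  assert (Hc : 0 < c).
  { destruct Hc0 as [|Hc0]; [assumption|].
    pose proof (HT h zh Thzh); rewrite <- Hc0 in *; nra. }
  split; [exact Hc|].
  intros w z Twz; cbn; rewrite hinner_scall.
  apply Rmult_le_reg_l with c; [exact Hc|].
  replace (c * (/ c * ⟪a, w⟫ + ⟪h, z⟫)) with (⟪a, w⟫ + ⟪h, z⟫ * c) by (field; lra).
  rewrite Rmult_0_r; exact (HT w z Twz).
Qed.

Theorem first_implies_second beta :
  0 < beta -> (forall h z, polar H T (h, z) -> nrm z = 1 -> ⟪h, z⟫ <= - beta) ->
  forall h, unit_sphere H h -> sqri (HOps H) (Proj_h H T) h ->
    exists z, T (h, z) /\ beta / 2 <= ⟪h, z⟫.
Proof.
  intros Hbeta cond_i h Hh Hsqri.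
  destruct (sqri_bounded_selection H T T_closed T_convex h Hsqri) as [r [m [Hr [Hm Hsel]]]].
  apply NNPP; intro Hno.
  assert (Hlt : forall z, T (h, z) -> ⟪h, z⟫ < beta / 2)
    by (intros z Thz; apply Rnot_le_lt; intro; apply Hno; exists z; auto).
  pose proof Hsqri as [[zh Thzh] _].
  set (sigma := 3 * beta / 4).
  destruct (cone_separation (HPair H) (hypograph_cone h) (h, sigma ⊙ h)) as [[a b] [Hsep Hx]].
  { apply hypograph_cone_convex. }
  { apply hypograph_cone_cone. }
  { exists (h, ⟪h, zh⟫ ⊙ h), h, zh, ⟪h, zh⟫; repeat split; auto; lra. }
  { exact (hypograph_cone_far h r m Hh Hsqri Hr Hm Hsel beta Hbeta Hlt). }
  cbn in Hx; rewrite hinner_scalr in Hx.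
  destruct (hypograph_separator_polar h zh a b sigma Thzh Hsep Hx) as [Hc Npol].
  pose proof (cond_i _ _ Npol Hh) as Hi; rewrite hinner_scall in Hi.
  assert (⟪a, h⟫ <= - beta * ⟪b, h⟫).
  { apply Rmult_le_reg_l with (/ ⟪b, h⟫); [apply Rinv_0_lt_compat; exact Hc|].
    replace (/ ⟪b, h⟫ * (- beta * ⟪b, h⟫)) with (- beta) by (field; lra); exact Hi. }
  unfold sigma in Hx; nra.
Qed.
End FirstImpliesSecond.

(** * (ii) implies (i) *)

Section SecondImpliesFirst.
Variables (H : HilbertSpace) (T : H * H -> Prop) (beta1 : R).
Hypothesis qri_Proj_z_sqri :
  forall z, qri (HOps H) (Proj_z H (polar H T)) z -> sqri (HOps H) (Proj_h H T) z.
Hypothesis cond_ii : forall h, unit_sphere H h -> sqri (HOps H) (Proj_h H T) h ->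
  exists z, T (h, z) /\ beta1 <= ⟪h, z⟫.

Lemma qri_polar_inner_le h z :
  qri (PairOps H) (polar H T) (h, z) -> ⟪h, z⟫ + beta1 * ⟪z, z⟫ <= 0.
Proof.
  intro Qhz.
  destruct (Req_dec (nrm z) 0) as [Hz0|Hz0].
  { rewrite (hnorm_eq0 H z Hz0), hinner_0r, hinner_0l; lra. }
  set (s := nrm z); assert (Hs : 0 < s) by (pose proof (hnorm_ge0 H z); unfold s; lra).
  set (u := / s ⊙ z).
  assert (Qu : qri (HOps H) (Proj_z H (polar H T)) u).
  { apply qri_scale; [apply Proj_z_cone, polar_cone| exact (qri_Proj_z H _ _ Qhz)|].
    apply Rinv_0_lt_compat; exact Hs. }
  assert (Uu : unit_sphere H u).
  { unfold unit_sphere, u; rewrite hnorm_scal_nonneg by (apply Rlt_le, Rinv_0_lt_compat; lra).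
    fold s; field; lra. }
  destruct (cond_ii u Uu (qri_Proj_z_sqri u Qu)) as [w [Tuw Huw]].
  pose proof (proj1 Qhz u w Tuw) as Hpol; simpl in Hpol.
  unfold u in Hpol, Huw; rewrite hinner_scalr in Hpol; rewrite hinner_scall in Huw.
  rewrite <- hnorm_sqr; fold s.
  (* polarity against (z/s, w) gives <h,z>/s + <z,w> <= 0, while <z,w> >= s beta1 *)
  assert (s * beta1 <= ⟪z, w⟫).
  { apply Rmult_le_reg_l with (/ s); [apply Rinv_0_lt_compat; lra|].
    replace (/ s * (s * beta1)) with beta1 by (field; lra); exact Huw. }
  assert (/ s * ⟪h, z⟫ <= - (s * beta1)) by lra.
  apply Rmult_le_reg_l with (/ s); [apply Rinv_0_lt_compat; lra|].
  replace (/ s * (⟪h, z⟫ + beta1 * (s * s))) with (/ s * ⟪h, z⟫ + s * beta1) by (field; lra).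
  rewrite Rmult_0_r; lra.
Qed.

Theorem polar_inner_le_of_qri p0 h z :
  qri (PairOps H) (polar H T) p0 -> polar H T (h, z) -> nrm z = 1 -> ⟪h, z⟫ <= - beta1.
Proof.
  destruct p0 as [h0 z0]; intros Qp0 Nhz Hz.
  set (dh := h0 ⊖ h); set (dz := z0 ⊖ z).
  assert (Quad : forall t, 0 < t <= 1 ->
      (⟪h, z⟫ + beta1 * ⟪z, z⟫) + t * (⟪h, dz⟫ + ⟪dh, z⟫ + 2 * beta1 * ⟪z, dz⟫)
      + t * t * (⟪dh, dz⟫ + beta1 * ⟪dz, dz⟫) <= 0).
  { intros t Ht.
    pose proof (qri_segment (HPair H) (polar H T) (h0, z0) (h, z) t
      (polar_convex H T) Qp0 Nhz Ht) as Qt.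
    pose proof (qri_polar_inner_le _ _ Qt) as Hle; simpl in Hle.
    replace (t ⊙ h0 ⊕ (1 - t) ⊙ h) with (h ⊕ t ⊙ dh) in Hle by (unfold dh; hvec_eq; ring).
    replace (t ⊙ z0 ⊕ (1 - t) ⊙ z) with (z ⊕ t ⊙ dz) in Hle by (unfold dz; hvec_eq; ring).
    rewrite !hinner_addl, !hinner_addr, !hinner_scall, !hinner_scalr, (hinner_sym H dz z) in Hle.
    lra. }
  pose proof (quadratic_le0_near0 _ _ _ Quad).
  rewrite <- hnorm_sqr, Hz in *; lra.
Qed.
End SecondImpliesFirst.

Theorem proposition4p3 (H : HilbertSpace) (T : H * H -> Prop)
  (T_closed : is_closed (PairOps H) T)
  (T_convex : is_convex (PairOps H) T)
  (T_cone : is_cone (PairOps H) T) :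
  let N := @polar H T in
  let cond_i := exists beta, 0 < beta /\
      forall h z, N (h, z) -> hnorm H z = 1 -> hinner H h z <= - beta in
  let cond_ii := exists beta1, 0 < beta1 /\
      forall h, unit_sphere H h -> sqri (HOps H) (@Proj_h H T) h ->
        exists z, T (h, z) /\ beta1 <= hinner H h z in
  (cond_i -> cond_ii) /\
  ((exists p, qri (PairOps H) N p) ->
   (forall z, qri (HOps H) (@Proj_z H N) z -> sqri (HOps H) (@Proj_h H T) z) ->
   cond_ii -> cond_i).
Proof.
  intros N cond_i cond_ii; split.
  - intros [beta [Hbeta Hi]]; exists (beta / 2); split; [lra|].
    exact (first_implies_second H T T_closed T_convex T_cone beta Hbeta Hi).
  - intros [p0 Hp0] Hincl [beta1 [Hbeta1 Hii]]; exists beta1; split; [exact Hbeta1|].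
    intros h z Nhz Hz; exact (polar_inner_le_of_qri H T beta1 Hincl Hii p0 h z Hp0 Nhz Hz).
Qed.
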